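(* Let $f:\{0,1\}^n\to\{0,1\}$, $\delta>0$, $\beta_1\ge0$, let $\mu$ be a bit-wise product probability distribution on $\{0,1\}^n$, and let $A$ be a subcube with $\mu(A)>0$ and $\mu_1(A)\le\delta\mu_0(A)$. Suppose $(w_R)$, indexed by subcubes, satisfies $w_R\ge0$, $\sum_{R\ni x}w_R\le1$ for all $x\in\{0,1\}^n$, and $\sum_{R\ni x}w_R\le\beta_1$ for all $x\in f^{-1}(0)$. Let $\mathcal B$ be the set of subcubes $B$ whose support is disjoint from the support of $A$. Then $\sum_{B\in\mathcal B}\mu_1(B)w_B\le\beta_1+\delta$.
   Context: A subcube with support $s\in\{0,1,\star\}^n$ is $\{x: s_i\ne\star\Rightarrow x_i=s_i\}$; its support is the set $\{i:s_i\in\{0,1\}\}$. For $A\subseteq\{0,1\}^n$, $\mu_z(A)=\mu(A\cap f^{-1}(z))$. Bit-wise product: $\mu(x)=\prod_i p_i(x_i)$ with $p_i(0)+p_i(1)=1$. *)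

From HB Require Import structures.
From mathcomp Require Import all_boot all_order all_algebra.
Set Implicit Arguments. Unset Strict Implicit. Unset Printing Implicit Defensive.
Import Order.TTheory GRing.Theory Num.Theory.
Local Open Scope ring_scope.

Definition point (n : nat) := {ffun 'I_n -> bool}.
(* a subcube is given by its pattern s in {0,1,*}^n; None stands for * *)
Definition subcube (n : nat) := {ffun 'I_n -> option bool}.

Definition in_cube n (s : subcube n) (x : point n) : bool :=
  [forall i, if s i is Some b then x i == b else true].

Definition supp n (s : subcube n) : {set 'I_n} := [set i | s i != None].

Definition mu_pt (R : numDomainType) n (p : 'I_n -> R) (x : point n) : R :=
  \prod_(i < n) (if x i then p i else 1 - p i).

Definition mu_cube (R : numDomainType) n (p : 'I_n -> R) (s : subcube n) : R :=
  \sum_(x : point n | in_cube s x) mu_pt p x.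

Definition mu_z (R : numDomainType) n (p : 'I_n -> R) (f : point n -> bool)
  (z : bool) (s : subcube n) : R :=
  \sum_(x : point n | in_cube s x && (f x == z)) mu_pt p x.

From HB Require Import structures.
From mathcomp Require Import all_boot all_order all_algebra.
Import Order.TTheory GRing.Theory Num.Theory.
Local Open Scope ring_scope.
Set Implicit Arguments. Unset Strict Implicit.

(* A subcube B whose support avoids that of A is independent of A under a
   product measure: mu(A ∩ B) = mu(A) mu(B), hence
   mu(A) * sum_B mu_1(B) w_B <= sum_B mu(A ∩ B) w_B
                             =  sum_{x in A} mu(x) sum_{B ∋ x} w_B.
   The inner sum is at most 1 on f^{-1}(1) and at most beta1 on f^{-1}(0), so
   the right-hand side is at most mu_1(A) + beta1 mu_0(A)
   <= (delta + beta1) mu_0(A) <= (delta + beta1) mu(A); divide by mu(A) > 0. *)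

Lemma ler_sum_subpred (R : numDomainType) (I : finType) (P Q : pred I)
    (F : I -> R) :
  (forall i, 0 <= F i) -> \sum_(i | P i && Q i) F i <= \sum_(i | P i) F i.
Proof. by move=> F_ge0; rewrite [leRHS](bigID Q) /= lerDl sumr_ge0. Qed.

Section ProductMeasure.

Variables (R : numDomainType) (n : nat) (p : 'I_n -> R).

Definition coord_mu (i : 'I_n) (b : bool) : R := if b then p i else 1 - p i.

Definition coord_in (s : subcube n) (i : 'I_n) : pred bool :=
  fun b => if s i is Some c then b == c else true.

Lemma coord_mu_sum i : \sum_b coord_mu i b = 1.
Proof. by rewrite big_bool /coord_mu /= addrC subrK. Qed.

Lemma sum_mu_pt_prod (P : 'I_n -> pred bool) :
  \sum_(x : point n | [forall i, P i (x i)]) mu_pt p x =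
  \prod_(i < n) \sum_(b | P i b) coord_mu i b.
Proof. by rewrite bigA_distr_big_dep; apply: eq_big. Qed.

Lemma mu_cubeE (s : subcube n) :
  mu_cube p s = \prod_(i < n) \sum_(b | coord_in s i b) coord_mu i b.
Proof. by rewrite -sum_mu_pt_prod. Qed.

Lemma mu_cube_cap_disjoint (A B : subcube n) :
  [disjoint supp B & supp A] ->
  \sum_(x : point n | in_cube A x && in_cube B x) mu_pt p x =
  mu_cube p A * mu_cube p B.
Proof.
move=> /disjointFr disBA.
have -> : \sum_(x : point n | in_cube A x && in_cube B x) mu_pt p x =
    \sum_(x : point n | [forall i, coord_in A i (x i) && coord_in B i (x i)])
      mu_pt p x.
  apply: eq_bigl => x; apply/andP/forallP => [[/forallP xA /forallP xB] i|xAB].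
    by apply/andP; split; [apply: xA | apply: xB].
  by split; apply/forallP => i; case/andP: (xAB i).
rewrite (sum_mu_pt_prod (fun i b => coord_in A i b && coord_in B i b)).
rewrite !mu_cubeE -big_split /=; apply: eq_bigr => i _.
have := disBA i; rewrite !inE /coord_in.
case: (A i) => [a|]; case: (B i) => [c|] /= disj.
- by have := disj isT.
- by under eq_bigl => b do rewrite andbT; rewrite coord_mu_sum mulr1.
- by rewrite coord_mu_sum mul1r.
- by rewrite coord_mu_sum mul1r.
Qed.

End ProductMeasure.

Section Probability.

Variables (R : realFieldType) (n : nat) (p : 'I_n -> R).
Hypothesis p01 : forall i, 0 <= p i <= 1.

Lemma mu_pt_ge0 (x : point n) : 0 <= mu_pt p x.
Proof.
apply: prodr_ge0 => i _; case/andP: (p01 i) => p_ge0 p_le1.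
by case: (x i); rewrite ?subr_ge0.
Qed.

Lemma mu_z_le_mu_cube f z (s : subcube n) : mu_z p f z s <= mu_cube p s.
Proof.
by apply: ler_sum_subpred => x; apply: mu_pt_ge0.
Qed.

Lemma mu_cube_mul_mu_z_le_cap f z (A B : subcube n) :
  [disjoint supp B & supp A] -> 0 <= mu_cube p A ->
  mu_cube p A * mu_z p f z B <=
  \sum_(x : point n | in_cube A x && in_cube B x) mu_pt p x.
Proof.
move=> disBA muA_ge0; rewrite mu_cube_cap_disjoint //.
by rewrite ler_wpM2l // mu_z_le_mu_cube.
Qed.

Lemma sum_disjoint_cubes_le (f : point n -> bool) (A : subcube n)
    (w : subcube n -> R) :
  0 <= mu_cube p A -> (forall Q, 0 <= w Q) ->
  mu_cube p A *
    \sum_(B : subcube n | [disjoint supp B & supp A]) mu_z p f true B * w B <=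
  \sum_(x : point n | in_cube A x) mu_pt p x *
    \sum_(Q : subcube n | in_cube Q x) w Q.
Proof.
move=> muA_ge0 w_ge0; rewrite mulr_sumr.
apply: le_trans (_ : \sum_(B : subcube n | [disjoint supp B & supp A])
    \sum_(x : point n | in_cube A x && in_cube B x) mu_pt p x * w B <= _).
  apply: ler_sum => B disBA; rewrite -mulr_suml mulrA ler_wpM2r //.
  exact: mu_cube_mul_mu_z_le_cap.
rewrite (exchange_big_dep (in_cube A)) /=; last by move=> B x _ /andP[].
apply: ler_sum => x xA; rewrite -mulr_sumr ler_wpM2l ?mu_pt_ge0 //.
under eq_bigl => Q do rewrite xA andbC.
exact: ler_sum_subpred.
Qed.

Lemma sum_mu_pt_by_value (f : point n -> bool) (A : subcube n) (a b : R) :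
  \sum_(x : point n | in_cube A x) mu_pt p x * (if f x then a else b) =
  a * mu_z p f true A + b * mu_z p f false A.
Proof.
rewrite /mu_z !mulr_sumr (bigID (fun x => f x)) /=.
congr (_ + _); apply: eq_big => x; case: (f x); rewrite ?andbT ?andbF //;
  by move=> _; rewrite mulrC.
Qed.

End Probability.

Theorem mainTheorem13 (R : realFieldType) (n : nat) (f : point n -> bool)
  (delta beta1 : R) (p : 'I_n -> R) (A : subcube n) (w : subcube n -> R) :
  0 < delta -> 0 <= beta1 ->
  (forall i, 0 <= p i <= 1) ->
  0 < mu_cube p A ->
  mu_z p f true A <= delta * mu_z p f false A ->
  (forall Q, 0 <= w Q) ->
  (forall x : point n, \sum_(Q : subcube n | in_cube Q x) w Q <= 1) ->
  (forall x : point n, f x = false -> \sum_(Q : subcube n | in_cube Q x) w Q <= beta1) ->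
  \sum_(B : subcube n | [disjoint supp B & supp A]) mu_z p f true B * w B
    <= beta1 + delta.
Proof.
move=> delta_gt0 beta1_ge0 p01 muA_gt0 muA1_le w_ge0 cover_le1 cover0_le.
rewrite -(ler_pM2l muA_gt0).
apply: le_trans (sum_disjoint_cubes_le p01 f (ltW muA_gt0) w_ge0) _.
apply: le_trans (_ : \sum_(x : point n | in_cube A x)
    mu_pt p x * (if f x then 1 else beta1) <= _).
  apply: ler_sum => x _; rewrite ler_wpM2l ?mu_pt_ge0 //.
  by case fx: (f x); [apply: cover_le1 | apply: cover0_le].
rewrite sum_mu_pt_by_value mul1r.
apply: le_trans (_ : (delta + beta1) * mu_z p f false A <= _).
  by rewrite mulrDl lerD2r.
rewrite addrC [leRHS]mulrC ler_wpM2l ?addr_ge0 ?(ltW delta_gt0) //.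
exact: mu_z_le_mu_cube.
Qed.
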